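(* Let $\{S_0,S_1,\dots,S_m\}$ be an admissible cover of $S=S_{p,q}$. Then for every $\ell\in\{0,1,\dots,m\}$, either $\mathbb V_{\mathbb F}\big(\bigcup_{i=0}^{\ell-1}S_i\big)=\varnothing$, or for every $\mathbf s\in \mathbb V_{\mathbb F}\big(\bigcup_{i=0}^{\ell-1}S_i\big)$ we have $$\mathbb V_{\mathbb F}\Big(\bigcup_{i=0}^{\ell}S_i\Big)=\mathbb V_{\mathbb F}\Big(\bigcup_{i=0}^{\ell}L_{\mathbf a=\mathbf s}(S_i)\Big).$$ (For $\ell=0$ the union $\bigcup_{i=0}^{-1}S_i$ is empty and its zero set is $\mathbb F^n$.)
   Context: Let $\mathbb F$ be a field of characteristic zero, $\mathbf x=(x_1,\dots,x_n)$ variables and $\mathbf a=(a_1,\dots,a_n)$ new indeterminates. For $p,q\in\mathbb F[\mathbf x]$ write $p(\mathbf x+\mathbf a)-q(\mathbf x)=\sum_{\alpha\in\mathbb N^n}c_\alpha(\mathbf a)\mathbf x^\alpha$ with $c_\alpha(\mathbf a)\in\mathbb F[\mathbf a]$, and let $S=S_{p,q}$ be the family of nonzero coefficients $c_\alpha(\mathbf a)$ (indexed by $\alpha$ with $\mathbf x^\alpha$ in the support of $p(\mathbf x+\mathbf a)-q(\mathbf x)$). On $\mathbb N^n$, $\beta\ge\alpha$ means $\beta_i\ge\alpha_i$ for all $i$, and $\beta>\alpha$ means $\beta\ge\alpha$, $\beta\neq\alpha$. A cover of $S$ is a collection $\{S_0,\dots,S_m\}$ of subsets whose union is $S$. It is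 admissible if (1) every polynomial in $S_0$ has total degree at most one in $\mathbf a$; and (2) for every $\ell=1,\dots,m$, if $c_\alpha\in S_\ell$ then $c_\beta\in\bigcup_{i=0}^{\ell-1}S_i$ for all $\beta>\alpha$ with $c_\beta\neq 0$. For $f\in\mathbb F[\mathbf a]$ let $f=\sum_{i\ge0}H^i(f)$ be its decomposition into homogeneous components in $\mathbf a$ ($H^i(f)$ homogeneous of degree $i$). For $\mathbf s\in\mathbb F^n$, the linearization of $f$ at $\mathbf s$ is $L_{\mathbf a=\mathbf s}(f)=H^0(f)+H^1(f)(\mathbf a)+\sum_{i\ge2}H^i(f)(\mathbf s)$, and for a set $P$ of polynomials $L_{\mathbf a=\mathbf s}(P)=\{L_{\mathbf a=\mathbf s}(f):f\in P\}$. For $P\subseteq\mathbb F[\mathbf a]$, $\mathbb V_{\mathbb F}(P)=\{\mathbf v\in\mathbb F^n: f(\mathbf v)=0\ \forall f\in P\}$. *)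

From HB Require Import structures.
From mathcomp Require Import all_boot all_order all_algebra.
From mathcomp Require Import mpoly.
Set Implicit Arguments. Unset Strict Implicit. Unset Printing Implicit Defensive.
Import Order.TTheory GRing.Theory.
Local Open Scope ring_scope.

Section Defs.
Variables (F : fieldType) (n : nat).

(* Polynomials in a = (a_1..a_n): {mpoly F[n]}.
   Polynomials in x with coefficients in F[a]: {mpoly {mpoly F[n]}[n]}. *)

(* p(x + a) as a polynomial in x with coefficients in F[a] *)
Definition shift_xa (p : {mpoly F[n]}) : {mpoly {mpoly F[n]}[n]} :=
  mmap (fun c : F => (c%:MP_[n])%:MP_[n])
       (fun i : 'I_n => 'X_i + ('X_i : {mpoly F[n]})%:MP_[n]) p.

Definition diff_pq (p q : {mpoly F[n]}) : {mpoly {mpoly F[n]}[n]} :=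
  shift_xa p - map_mpoly (fun c : F => c%:MP_[n]) q.

Definition coef_pq (p q : {mpoly F[n]}) (alpha : 'X_{1..n}) : {mpoly F[n]} :=
  (diff_pq p q)@_alpha.

Definition S_pq (p q : {mpoly F[n]}) : {mpoly F[n]} -> Prop :=
  fun f => exists2 alpha, alpha \in msupp (diff_pq p q) & f = coef_pq p q alpha.

Definition mnm_geq (beta alpha : 'X_{1..n}) : bool := [forall i, alpha i <= beta i]%N.
Definition mnm_gt (beta alpha : 'X_{1..n}) : bool := mnm_geq beta alpha && (beta != alpha).

Definition union_lt (Sc : nat -> {mpoly F[n]} -> Prop) (k : nat) : {mpoly F[n]} -> Prop :=
  fun f => exists2 i, (i < k)%N & Sc i f.

Definition admissible_cover (p q : {mpoly F[n]}) (m : nat)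
    (Sc : nat -> {mpoly F[n]} -> Prop) : Prop :=
  [/\
      (forall f, S_pq p q f <-> union_lt Sc m.+1 f),
      (forall f, Sc 0%N f -> forall mo, mo \in msupp f -> (mdeg mo <= 1)%N) &
      (forall l : nat, (1 <= l <= m)%N -> forall alpha : 'X_{1..n},
          Sc l (coef_pq p q alpha) ->
          forall beta : 'X_{1..n}, mnm_gt beta alpha -> coef_pq p q beta != 0 ->
            union_lt Sc l (coef_pq p q beta))].

Definition hcomp (i : nat) (f : {mpoly F[n]}) : {mpoly F[n]} :=
  \sum_(mo <- msupp f | mdeg mo == i) f@_mo *: 'X_[mo].

(* linearization L_{a=s}(f) = H^0 f + H^1 f + sum_{i>=2} H^i(f)(s)
   (degrees of f are < msize f, so the sum is finite) *)
Definition linearize (s : 'I_n -> F) (f : {mpoly F[n]}) : {mpoly F[n]} :=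
  hcomp 0 f + hcomp 1 f + (\sum_(2 <= i < msize f) (hcomp i f).@[s])%:MP_[n].

Definition linearize_set (s : 'I_n -> F) (P : {mpoly F[n]} -> Prop)
  : {mpoly F[n]} -> Prop :=
  fun g => exists2 f, P f & g = linearize s f.

Definition zero_set (P : {mpoly F[n]} -> Prop) (v : 'I_n -> F) : Prop :=
  forall f, P f -> f.@[v] = 0.

End Defs.

From HB Require Import structures.
From mathcomp Require Import all_boot all_order all_algebra.
From mathcomp Require Import mpoly ring.
Set Implicit Arguments. Unset Strict Implicit. Unset Printing Implicit Defensive.
Import Order.TTheory GRing.Theory.
Local Open Scope ring_scope.

(* Write P_b(u) for the coefficient of x^b in p(x + u), so that c_b(u) = P_b(u) - q_b.
   If c_b(v) = c_b(s) for every b > a, the coefficients of p(x + v) - p(x + s) above a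
   vanish, so its a-coefficient does not change under a further translation of x.
   With h = v - s this makes k |-> c_a(k h) an affine function on the naturals, of slope
   c_a(v) - c_a(s).  Expanding c_a(k h) = sum_d k^d H^d(c_a)(h) and using characteristic
   zero, H^1(c_a)(h) = c_a(v) - c_a(s): the components of degree >= 2 of c_a take the
   same value at v and at s, i.e. L_{a=s}(c_a) and c_a agree at v.  Admissibility of the
   cover provides these hypotheses layer by layer, and an induction over the layers
   gives the second alternative for every l. *)

Lemma mmap_rmorph (n : nat) (R S T : comNzRingType) (f : R -> S) (h : 'I_n -> S)
   (psi : {rmorphism S -> T}) (p : {mpoly R[n]}) :
  psi (mmap f h p) = mmap (psi \o f) (psi \o h) p.
Proof.
rewrite /mmap rmorph_sum; apply: eq_bigr => m _.
by rewrite rmorphM /mmap1 rmorph_prod; congr (_ * _); apply: eq_bigr => i _; rewrite rmorphXn.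
Qed.

Lemma eq_mmap (n : nat) (R S : ringType) (f1 f2 : R -> S) (h1 h2 : 'I_n -> S)
   (p : {mpoly R[n]}) : f1 =1 f2 -> h1 =1 h2 -> mmap f1 h1 p = mmap f2 h2 p.
Proof.
by move=> ef eh; apply: eq_bigr => m _; rewrite ef (mmap1_eq _ eh).
Qed.

Section Translation.
Variables (R : comNzRingType) (n : nat).
Implicit Types (f D : {mpoly R[n]}) (u w : 'I_n -> R).

Lemma mcoeffMXU_sub f (i : 'I_n) (g : 'X_{1..n}) : (0 < g i)%N ->
  (f * 'X_i)@_g = f@_(g - U_(i))%MM.
Proof.
move=> gi; have gE : g = (U_(i) + (g - U_(i)))%MM.
  apply/mnmP=> j; rewrite mnmDE mnmBE mnm1E.
  case: (eqVneq i j) => [<-|_] /=; [by rewrite addnC subnK | by rewrite add0n subn0].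
by rewrite {1}gE mcoeffMX.
Qed.

Lemma mcoeffMXU_eq0 f (i : 'I_n) (g : 'X_{1..n}) : g i = 0%N -> (f * 'X_i)@_g = 0.
Proof.
move=> gi; apply/eqP; rewrite mcoeff_eq0; apply/negP.
rewrite (perm_mem (msuppMX _ _)) => /mapP [m' _ gE].
by move: gi; rewrite gE mnmDE mnm1E eqxx.
Qed.

Definition top_monomial f (b : 'X_{1..n}) :=
  (forall g, f@_g != 0 -> (g <= b)%MM) /\ f@_b = 1.

Lemma top_monomial1 : top_monomial 1 0%MM.
Proof.
split; last by rewrite mcoeff1 eqxx.
move=> g; rewrite mcoeff1; case: (eqVneq g 0%MM) => [-> _|]; last by rewrite eqxx.
by apply/mnm_lepP.
Qed.

Lemma top_monomialM f b (i : 'I_n) (c : R) :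
  top_monomial f b -> top_monomial (f * ('X_i + c%:MP)) (b + U_(i))%MM.
Proof.
case=> fb fb1.
have coefE g : (f * ('X_i + c%:MP))@_g = (f * 'X_i)@_g + c * f@_g.
  by rewrite mulrDr mcoeffD [f * c%:MP]mulrC mcoeffCM.
have below g : f@_g != 0 -> (g <= b + U_(i))%MM.
  by move/fb => le_gb; apply: lepm_trans le_gb (lem_addr _ _).
split => [g|].
  rewrite coefE; case: (posnP (g i)) => [gi|gi].
    rewrite mcoeffMXU_eq0 // add0r => nz.
    by apply: below; apply: contraNneq nz => ->; rewrite mulr0.
  have [z|] := eqVneq (f * 'X_i)@_g 0.
    rewrite z add0r => nz.
    by apply: below; apply: contraNneq nz => ->; rewrite mulr0.
  rewrite mcoeffMXU_sub // => /fb /mnm_lepP le_gb _; apply/mnm_lepP => j.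
  have := le_gb j; rewrite mnmBE mnmDE mnm1E.
  by case: (eqVneq i j) => [<-|_] /=; rewrite ?subn0 ?addn0 // leq_subLR addnC.
rewrite coefE mcoeffMXU_sub; last by rewrite mnmDE mnm1E eqxx addn1.
have -> : (b + U_(i) - U_(i))%MM = b by apply/mnmP=> j; rewrite mnmBE mnmDE addnK.
have -> : f@_(b + U_(i)) = 0.
  apply/eqP; apply: contraT => /fb /mnm_lepP /(_ i).
  by rewrite mnmDE mnm1E eqxx addn1 ltnn.
by rewrite fb1 mulr0 addr0.
Qed.

Lemma top_monomialX f b (i : 'I_n) (c : R) k : top_monomial f b ->
  top_monomial (f * ('X_i + c%:MP) ^+ k) (b + U_(i) *+ k)%MM.
Proof.
elim: k f b => [|k IH] f b fb; first by rewrite expr0 mulr1 mulm0n addm0.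
by rewrite exprS mulrA mulmS addmA; apply/IH/top_monomialM.
Qed.

Lemma top_monomial_mmap1 w (b : 'X_{1..n}) :
  top_monomial (mmap1 (fun i => 'X_i + (w i)%:MP) b) b.
Proof.
suff: forall r : seq 'I_n, top_monomial (\prod_(i <- r) ('X_i + (w i)%:MP) ^+ b i)
        (\big[+%MM/0%MM]_(i <- r) (U_(i) *+ b i))%MM.
  move/(_ (index_enum 'I_n)).
  have -> // : (\big[+%MM/0%MM]_(i <- index_enum 'I_n) (U_(i) *+ b i))%MM = b.
  apply/mnmP => j; rewrite mnm_sumE (bigD1 j) //= big1 => [|i /negbTE ij].
    by rewrite mulmnE mnm1E eqxx mul1n addn0.
  by rewrite mulmnE mnm1E ij.
elim=> [|i r IH]; first by rewrite !big_nil; exact: top_monomial1.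
by rewrite !big_cons mulrC addmC; exact: top_monomialX.
Qed.

Definition mshift w D : {mpoly R[n]} :=
  mmap (@mpolyC n R) (fun i => 'X_i + (w i)%:MP_[n]) D.

Lemma mcoeff_mshift w D (a : 'X_{1..n}) :
  (forall b, mnm_gt b a -> D@_b = 0) -> (mshift w D)@_a = D@_a.
Proof.
move=> D_above; rewrite /mshift /mmap raddf_sum [in RHS](mpolyE D) raddf_sum /=.
apply: eq_big_seq => m mD; rewrite mcoeffCM mcoeffZ mcoeffX.
have [->|nma] := eqVneq m a; first by have [_ ->] := top_monomial_mmap1 w a.
suff -> : (mmap1 (fun i => 'X_i + (w i)%:MP) m)@_a = 0 by rewrite mulr0.
apply/eqP; apply: contraT => /(proj1 (top_monomial_mmap1 w m)) /mnm_lepP le_am.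
have /D_above : mnm_gt m a by rewrite /mnm_gt nma andbT; apply/forallP.
by move: mD; rewrite mcoeff_msupp => /eqP.
Qed.

Lemma mshiftB w : {morph mshift w : x y / x - y}.
Proof. exact: mmapB. Qed.

Lemma mshift_comp w u D : mshift w (mshift u D) = mshift (fun i => w i + u i) D.
Proof.
rewrite {1}/mshift (mmap_rmorph _ _ (mshift w)); apply: eq_mmap => [c|i] /=.
  by rewrite /mshift mmapC.
by rewrite /mshift mmapD mmapX mmap1U mmapC /= -addrA raddfD.
Qed.

End Translation.

Section CoefficientFamily.
Variables (F : fieldType) (n : nat).
Implicit Types (p q f : {mpoly F[n]}) (u w : 'I_n -> F).

Lemma coef_pq_meval p q (b : 'X_{1..n}) u :
  (coef_pq p q b).@[u] = (mshift u p)@_b - q@_b.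
Proof.
rewrite /coef_pq /diff_pq (@mcoeffB n {mpoly F[n]}) (@mevalB n F u).
have -> : (fun c : F => c%:MP_[n]) = (@mpolyC n F) by [].
congr (_ - _); last by rewrite (mcoeff_map_mpoly (@mpolyC n F)) mevalC.
transitivity ((map_mpoly (meval u) (shift_xa p))@_b).
  by rewrite (mcoeff_map_mpoly (meval u)).
rewrite /shift_xa (mmap_rmorph _ _ (map_mpoly (meval u))) /mshift.
apply: (congr1 (mcoeff b)); apply: eq_mmap => [c|i] /=.
  by rewrite map_mpolyC; congr mpolyC; exact: mevalC.
rewrite rmorphD /= map_mpolyX map_mpolyC; congr (_ + _); congr mpolyC; exact: mevalXU.
Qed.

Lemma coef_pq_mevalB p q (b : 'X_{1..n}) u w :
  (coef_pq p q b).@[u] - (coef_pq p q b).@[w] = (mshift u p - mshift w p)@_b.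
Proof. by rewrite !coef_pq_meval mcoeffB opprB addrA subrK. Qed.

End CoefficientFamily.

Section HomogeneousComponents.
Variables (F : fieldType) (n : nat).
Implicit Types (f : {mpoly F[n]}) (u v : 'I_n -> F).

Definition meval_high u f := \sum_(2 <= d < msize f) (hcomp d f).@[u].

Lemma meval_hcomp d f u : (hcomp d f).@[u] =
  \sum_(mo <- msupp f | mdeg mo == d) f@_mo * \prod_i u i ^+ mo i.
Proof.
rewrite /hcomp (big_morph _ (mevalD u) (meval0 u)).
by apply: eq_bigr => mo _; rewrite mevalZ mevalX.
Qed.

Lemma meval_hcompZ d f (k : F) u :
  (hcomp d f).@[fun i => k * u i] = k ^+ d * (hcomp d f).@[u].
Proof.
rewrite !meval_hcomp mulr_sumr; apply: eq_bigr => mo /eqP <-.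
rewrite (eq_bigr (fun i => k ^+ mo i * u i ^+ mo i)) => [|i _]; last by rewrite exprMn.
by rewrite big_split /= prodrXr mdegE mulrCA.
Qed.

Lemma hcomp_eq0 d f : (msize f <= d)%N -> hcomp d f = 0.
Proof.
move=> le_fd; rewrite /hcomp big1_seq // => mo /andP [/eqP deg_mo /msize_mdeg_lt].
by rewrite deg_mo ltnNge le_fd.
Qed.

Lemma meval_sum_hcomp f u N : (msize f <= N)%N ->
  f.@[u] = \sum_(d < N) (hcomp d f).@[u].
Proof.
move=> le_fN; rewrite mevalE.
under [RHS]eq_bigr do rewrite meval_hcomp big_mkcond.
rewrite exchange_big /=; apply: eq_big_seq => mo mof.
have lt_moN : (mdeg mo < N)%N by apply: leq_trans (msize_mdeg_lt mof) le_fN.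
by rewrite -big_mkcond (big_pred1 (Ordinal lt_moN)) // => d; rewrite /= eq_sym -val_eqE.
Qed.

Lemma meval_high_bound f u N : (msize f <= N)%N ->
  \sum_(2 <= d < N) (hcomp d f).@[u] = meval_high u f.
Proof.
move=> le_fN; rewrite /meval_high.
case: (leqP (msize f) 2) => [le_f2|lt2f].
  rewrite [in RHS]big_geq // big_nat big1 // => d /andP [le2d _].
  by rewrite hcomp_eq0 ?meval0 // (leq_trans le_f2).
rewrite (@big_cat_nat _ _ _ (msize f)) ?(ltnW lt2f) //= [X in _ + X]big_nat.
rewrite [X in _ + X]big1 ?addr0 //.
by move=> d /andP [le_fd _]; rewrite hcomp_eq0 ?meval0.
Qed.

Lemma meval_hcomp_split f u :
  f.@[u] = (hcomp 0 f).@[u] + (hcomp 1 f).@[u] + meval_high u f.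
Proof.
rewrite (@meval_sum_hcomp f u (msize f + 2)) ?leq_addr //.
rewrite -(big_mkord xpredT (fun d => (hcomp d f).@[u])) big_ltn ?addn2 //.
by rewrite big_ltn ?addn2 // meval_high_bound ?addrA // -addn2 leq_addr.
Qed.

Lemma meval_linearize s f v :
  (linearize s f).@[v] = (hcomp 0 f).@[v] + (hcomp 1 f).@[v] + meval_high s f.
Proof. by rewrite /linearize !mevalD mevalC. Qed.

Lemma meval_hcomp0 f u v : (hcomp 0 f).@[u] = (hcomp 0 f).@[v].
Proof.
rewrite !meval_hcomp; apply: eq_bigr => mo; rewrite mdeg_eq0 => /eqP ->.
by rewrite !big1 // => i _; rewrite mnm0E expr0.
Qed.

Lemma meval_hcomp1B f u v :
  (hcomp 1 f).@[u] - (hcomp 1 f).@[v] = (hcomp 1 f).@[fun i => u i - v i].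
Proof.
rewrite !meval_hcomp -sumrB; apply: eq_bigr => mo /mdeg1P [j /eqP ->].
have evalU w : \prod_i w i ^+ (U_(j)%MM : 'X_{1..n}) i = w j :> F.
  by rewrite -(mmap1U w j).
by rewrite -mulrBr !evalU.
Qed.

Lemma meval_linearize_id s f v :
  meval_high v f = meval_high s f -> (linearize s f).@[v] = f.@[v].
Proof. by move=> high_vs; rewrite meval_linearize (meval_hcomp_split f v) high_vs. Qed.

Lemma meval_high_deg_le1 f u :
  (forall mo, mo \in msupp f -> (mdeg mo <= 1)%N) -> meval_high u f = 0.
Proof.
move=> deg_f; rewrite /meval_high big_nat big1 // => d /andP [le2d _].
rewrite /hcomp big1_seq ?meval0 // => mo /andP [/eqP deg_mo /deg_f].
by rewrite deg_mo leqNgt (leq_trans _ le2d).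
Qed.

End HomogeneousComponents.

Section CharZero.
Variables (F : fieldType) (F_char0 : [pchar F] =i pred0).

Lemma natr_inj_pchar0 : injective (fun k : nat => k%:R : F).
Proof.
move: F_char0 => /pcharf0P natr_eq0 i j /= eq_ij.
wlog le_ij : i j eq_ij / (i <= j)%N.
  by move=> W; case: (leqP i j) => [|/ltnW] le; [|apply/esym]; apply: W.
have: (j - i)%:R == 0 :> F by rewrite natrB // eq_ij subrr.
by rewrite natr_eq0 subn_eq0 => le_ji; apply/eqP; rewrite eqn_leq le_ij le_ji.
Qed.

Lemma poly_affine_nat (P : {poly F}) (a e : F) :
  (forall k : nat, P.[k%:R] = a + k%:R * e) -> P = a%:P + e *: 'X.
Proof.
move=> Pk; apply/eqP; rewrite -subr_eq0; apply/eqP.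
set Q := P - _; apply: (@roots_geq_poly_eq0 _ Q [seq k%:R | k <- iota 0 (size Q)]).
- apply/allP => x /mapP [k _ ->].
  by rewrite /root /Q !hornerE Pk mulrC subrr.
- by rewrite map_inj_uniq ?iota_uniq //; apply: natr_inj_pchar0.
- by rewrite size_map size_iota.
Qed.

End CharZero.

Section LinearizationAtCoefficient.
Variables (F : fieldType) (n : nat) (F_char0 : [pchar F] =i pred0).
Variables (p q : {mpoly F[n]}) (a : 'X_{1..n}) (s v : 'I_n -> F).
Hypothesis coef_above : forall b, mnm_gt b a -> (coef_pq p q b).@[v] = (coef_pq p q b).@[s].

Let c := coef_pq p q a.
Let e := c.@[v] - c.@[s].
Let h i := v i - s i.

Lemma coef_pq_meval_translateB (t : 'I_n -> F) :
  c.@[fun i => t i + v i] - c.@[fun i => t i + s i] = e.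
Proof.
have D_above b : mnm_gt b a -> (mshift v p - mshift s p)@_b = 0.
  by move/coef_above/eqP; rewrite -subr_eq0 coef_pq_mevalB => /eqP.
rewrite /e /c !coef_pq_mevalB; apply: etrans (mcoeff_mshift t D_above).
by rewrite mshiftB !mshift_comp.
Qed.

Lemma coef_pq_meval_affine (k : nat) :
  c.@[fun i => k%:R * h i] = c.@[fun=> 0] + k%:R * e.
Proof.
elim: k => [|k IH].
  by rewrite mul0r addr0; apply: meval_eq => i; rewrite mul0r.
have := coef_pq_meval_translateB (fun i => k%:R * h i - s i).
rewrite [X in X - _](@meval_eq _ _ _ (fun i => k.+1%:R * h i)) => [|i]; last first.
  by rewrite /h -natr1 /=; ring.
rewrite [X in _ - X](@meval_eq _ _ _ (fun i => k%:R * h i)) => [|i]; last by rewrite /= subrK.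
by rewrite IH -natr1 => /eqP; rewrite subr_eq => /eqP ->; ring.
Qed.

Lemma meval_hcomp1_coef_pq : (hcomp 1 c).@[h] = e.
Proof.
pose P := \poly_(d < msize c + 2) (hcomp d c).@[h].
have P_affine k : P.[k%:R] = c.@[fun=> 0] + k%:R * e.
  rewrite -coef_pq_meval_affine (@meval_sum_hcomp _ _ _ _ (msize c + 2)) ?leq_addr //.
  by rewrite horner_poly; apply: eq_bigr => d _; rewrite meval_hcompZ mulrC.
have := congr1 (fun Q : {poly F} => Q`_1) (poly_affine_nat F_char0 P_affine).
by rewrite coef_poly addn2 coefD coefC coefZ coefX mulr1 add0r.
Qed.

Lemma meval_high_coef_pq : meval_high v c = meval_high s c.
Proof.
have := meval_hcomp1_coef_pq; rewrite -meval_hcomp1B /e.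
rewrite [c.@[v]]meval_hcomp_split [c.@[s]]meval_hcomp_split (meval_hcomp0 c s v).
move=> /eqP; rewrite -subr_eq0 => /eqP E.
by apply/esym/eqP; rewrite -subr_eq0; apply/eqP; rewrite -[RHS]E; ring.
Qed.

End LinearizationAtCoefficient.

Section AdmissibleCover.
Variables (F : fieldType) (n : nat) (F_char0 : [pchar F] =i pred0).
Variables (p q : {mpoly F[n]}) (m : nat) (Sc : nat -> {mpoly F[n]} -> Prop).
Hypothesis cover : admissible_cover p q m Sc.

Lemma zero_set_union_le j k (x : 'I_n -> F) :
  (j <= k)%N -> zero_set (union_lt Sc k) x -> zero_set (union_lt Sc j) x.
Proof. by move=> le_jk Zx f [i lt_ij Sf]; apply: Zx; exists i => //; apply: leq_trans le_jk. Qed.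

Lemma meval_linearize_cover j f (s v : 'I_n -> F) : (j <= m)%N -> Sc j f ->
  zero_set (union_lt Sc j) s -> zero_set (union_lt Sc j) v ->
  (linearize s f).@[v] = f.@[v].
Proof.
case: cover => covers deg_S0 layered le_jm Sf Zs Zv; apply: meval_linearize_id.
case: (posnP j) => [j0|j_gt0].
  by subst j; rewrite !meval_high_deg_le1 // => mo; apply: deg_S0.
have [a _ fE] : S_pq p q f by apply/covers; exists j.
subst f; apply: meval_high_coef_pq => // b lt_ab.
have [->|nz] := eqVneq (coef_pq p q b) 0; first by rewrite !meval0.
have Sb : union_lt Sc j (coef_pq p q b) by apply: (layered _ _ _ Sf); rewrite ?j_gt0.
by rewrite Zs ?Zv.
Qed.

End AdmissibleCover.

Unset Implicit Arguments.
Theorem theorem1p1 (F : fieldType) (n : nat) (F_char0 : [pchar F] =i pred0)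
    (p q : {mpoly F[n]}) (m : nat) (Sc : nat -> {mpoly F[n]} -> Prop) :
  admissible_cover p q m Sc ->
  forall l : nat, (l <= m)%N ->
    (forall v : 'I_n -> F, ~ zero_set (union_lt Sc l) v)
    \/
    (forall s : 'I_n -> F, zero_set (union_lt Sc l) s ->
       forall v : 'I_n -> F,
         zero_set (union_lt Sc l.+1) v <->
         zero_set (union_lt (fun i => linearize_set s (Sc i)) l.+1) v).
Proof.
move=> cover l le_lm; right => s Zs v.
have lin_eq i f : (i <= l)%N -> Sc i f -> zero_set (union_lt Sc i) v ->
    (linearize s f).@[v] = f.@[v].
  move=> le_il Sf; apply: (meval_linearize_cover F_char0 cover _ Sf).
    exact: leq_trans le_lm.
  exact: zero_set_union_le Zs.
split=> [Zv _ [i lt_il [f Sf ->]] | ZLv].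
  rewrite (lin_eq i f) //; first by apply: Zv; exists i.
  by apply: zero_set_union_le Zv; apply: ltnW.
suff Zv_le i : (i <= l.+1)%N -> zero_set (union_lt Sc i) v by apply: Zv_le.
elim: i => [_ f [] // | i IH lt_il f [j le_ji Sf]].
have [lt_ji|ge_ji] := ltnP j i; first by apply: (IH (ltnW lt_il)); exists j.
have eq_ji : j = i by apply/eqP; rewrite eqn_leq ge_ji andbT -ltnS.
subst j; rewrite -(lin_eq i f) //; last exact: IH (ltnW lt_il).
by apply: ZLv; exists i => //; exists f.
Qed.
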